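(* Let $G_0$ be a fixed $n\times l$ binary matrix, $G_1$ a fixed $n\times k$ binary matrix and $\mathbf m\in\{0,1\}^k$ fixed. Then $$P(E=0)\le\sum_{u=d_0}^{n}\beta^{u}(1-\beta)^{n-u}\sum_{w=d_0}^{u}B_{0,w}\binom{n-w}{u-w}.$$
   Context: All arithmetic is over $\mathrm{GF}(2)$. $\mathcal C_0^{\perp}=\{\mathbf x\in\{0,1\}^n: G_0^T\mathbf x=\mathbf 0\}$; $B_{0,w}$ is the number of vectors of Hamming weight $w$ in $\mathcal C_0^\perp$, and $d_0$ is the minimum Hamming weight of a nonzero vector of $\mathcal C_0^\perp$. Defect model: each of the $n$ memory cells is independently defective with probability $\beta\in(0,1)$; a defective cell is stuck at $0$ or at $1$, each with probability $1/2$, independently. Let $\mathcal U$ be the set of defect positions, $U=|\mathcal U|$, $\mathbf s^{\mathcal U}$ the vector of stuck-at values. For a matrix $M$ (resp. vector $\mathbf v$) with rows indexed by $\{1,\dots,n\}$, $M^{\mathcal U}$ (resp. $\mathbf v^{\mathcal U}$) denotes the rows indexed by $\mathcal U$. Encoding: with $\mathbf b^{\mathcal U}=(G_1\mathbf m)^{\mathcal U}+\mathbf s^{\mathcal U}$, look for $\mathbf d\in\{0,1\}^l$ with $G_0^{\mathcal U}\mathbf d=\mathbf b^{\mathcal U}$; $E=1$ if such $\mathbf d$ exists and $E=0$ (encoding failure) otherwise. *)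

From HB Require Import structures.
From mathcomp Require Import all_boot all_order all_algebra.
Set Implicit Arguments. Unset Strict Implicit. Unset Printing Implicit Defensive.
Import Order.TTheory GRing.Theory Num.Theory.
Local Open Scope ring_scope.

Definition hwt (n : nat) (x : 'cV['F_2]_n) : nat := #|[set i : 'I_n | x i 0 != 0]|.

Definition in_dual (n l : nat) (G0 : 'M['F_2]_(n, l)) (x : 'cV['F_2]_n) : bool :=
  G0^T *m x == 0.

Definition Bw (n l : nat) (G0 : 'M['F_2]_(n, l)) (w : nat) : nat :=
  #|[set x : 'cV['F_2]_n | in_dual G0 x && (hwt x == w)]|.

(* d_0 : minimum weight of a nonzero vector of C0^perp
   (convention: n+1 if C0^perp = {0}, i.e. the minimum over an empty set) *)
Definition d0 (n l : nat) (G0 : 'M['F_2]_(n, l)) : nat :=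
  \big[minn/n.+1]_(x : 'cV['F_2]_n | in_dual G0 x && (x != 0)) hwt x.

(* E = 1 : there is d with G0^U d = b^U, b^U = (G1 m)^U + s^U *)
Definition encodable (n l k : nat) (G0 : 'M['F_2]_(n, l)) (G1 : 'M['F_2]_(n, k))
  (m : 'cV['F_2]_k) (U : {set 'I_n}) (s : 'cV['F_2]_n) : bool :=
  [exists d : 'cV['F_2]_l, [forall i in U, (G0 *m d) i 0 == (G1 *m m) i 0 + s i 0]].

(* P(E = 0): the defect set U has probability beta^|U| (1-beta)^(n-|U|); the stuck-at
   values s^U are uniform on {0,1}^U (probability (1/2)^|U|); s^U is represented by a
   vector s in 'cV_n supported on U. *)
Definition P_fail (R : realFieldType) (n l k : nat) (beta : R)
  (G0 : 'M['F_2]_(n, l)) (G1 : 'M['F_2]_(n, k)) (m : 'cV['F_2]_k) : R :=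
  \sum_(U : {set 'I_n})
    \sum_(s : 'cV['F_2]_n | [forall i, (i \notin U) ==> (s i 0 == 0)])
      beta ^+ #|U| * (1 - beta) ^+ (n - #|U|) * (2%:R)^-1 ^+ #|U|
        * (~~ encodable G0 G1 m U s)%:R.

From HB Require Import structures.
From mathcomp Require Import all_boot all_order all_algebra.
Import Order.TTheory GRing.Theory Num.Theory.
Local Open Scope ring_scope.

(* If no nonzero word of the dual code is supported on the defect set U, the
   rows of G0 indexed by U are independent, so G0^U d = b^U is solvable for
   every right-hand side and encoding cannot fail.  Hence, whatever the
   stuck-at values, P(E = 0 | U) is at most the number of nonzero dual words
   supported on U.  Summing beta^|U| (1 - beta)^(n - |U|) times this count over
   U and exchanging the sums, a dual word of weight w lies in exactly
   C(n - w, u - w) defect sets of size u. *)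

Lemma big_nat_partition (R : Type) (idx : R) (op : Monoid.com_law idx) (I : finType)
    (P : pred I) (f : I -> nat) (a b : nat) (F : I -> R) :
  (forall i, P i -> a <= f i < b)%N ->
  \big[op/idx]_(i | P i) F i
  = \big[op/idx]_(a <= w < b) \big[op/idx]_(i | P i && (f i == w)) F i.
Proof.
move=> f_range; rewrite -(exchange_big_dep xpredT) //=; apply: eq_bigr => i Pi.
rewrite big_mkcond (bigD1_seq (f i)) ?mem_index_iota ?f_range ?iota_uniq //= eqxx.
by rewrite big1 ?Monoid.mulm1 // => w; rewrite eq_sym => /negbTE ->.
Qed.

Lemma card_supersets (T : finType) (S : {set T}) (u : nat) :
  #|[set U : {set T} | S \subset U & #|U| == u]|
  = ('C(#|T| - #|S|, u - #|S|) * (#|S| <= u))%N.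
Proof.
have [le_Su | lt_uS] := leqP #|S| u; last first.
  rewrite muln0; apply/eqP; rewrite cards_eq0; apply/eqP/setP => U; rewrite !inE.
  apply/negbTE; apply: contraTN lt_uS => /andP [/subset_leq_card SU /eqP <-].
  by rewrite -leqNgt.
have -> : (#|T| - #|S| = #|~: S|)%N by rewrite -(cardsC S) addKn.
rewrite muln1 -cards_draws -(@card_in_imset _ _ (fun U => U :\: S)).
  apply: eq_card => A; rewrite inE; apply/imsetP/andP => [[U] | [A_S /eqP cardA]].
    rewrite inE => /andP [SU /eqP cardU] ->.
    by rewrite subsetDr cardsD (setIidPr SU) cardU.
  have AS0 : [disjoint A & S] by rewrite disjoints_subset.
  exists (A :|: S); last by rewrite /= setDUl setDv setU0; apply/esym/setDidPl.
  by rewrite inE subsetUr cardsU (disjoint_setI0 AS0) cards0 subn0 cardA subnK ?eqxx.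
move=> U1 U2; rewrite !inE => /andP [SU1 _] /andP [SU2 _] /setP eqD.
apply/setP => i; have := eqD i; rewrite !inE.
by have [iS | //] := boolP (i \in S); rewrite (subsetP SU1 _ iS) (subsetP SU2 _ iS).
Qed.

Lemma sum_supersets (V : nmodType) (T : finType) (S : {set T}) (g : nat -> V) :
  \sum_(U : {set T} | S \subset U) g #|U|
  = \sum_(0 <= u < #|T|.+1) g u *+ ('C(#|T| - #|S|, u - #|S|) * (#|S| <= u)).
Proof.
rewrite (@big_nat_partition _ _ _ _ _ (fun U : {set T} => #|U|) 0 #|T|.+1); last first.
  by move=> U _; rewrite ltnS max_card.
apply: eq_bigr => u _; rewrite -card_supersets -sumr_const.
by apply: eq_big => [U | U /andP [_ /eqP ->]]; rewrite ?inE.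
Qed.

Definition supp {R : nmodType} {n : nat} (x : 'cV[R]_n) : {set 'I_n} :=
  [set i | x i 0 != 0].

Lemma supp_subsetE (R : nmodType) (n : nat) (x : 'cV[R]_n) (U : {set 'I_n}) :
  (supp x \subset U) = [forall i, (i \notin U) ==> (x i 0 == 0)].
Proof.
apply/subsetP/forallP => [xU i | xU i].
  by apply/implyP; apply: contraR => xi; apply: (xU i); rewrite inE.
by rewrite inE; apply: contraR; exact/implyP.
Qed.

Lemma solvable_on_of_dual_free (F : fieldType) (n l : nat) (G : 'M[F]_(n, l))
    (U : {set 'I_n}) (c : 'cV[F]_n) :
  (forall x : 'cV[F]_n, G^T *m x = 0 -> supp x \subset U -> x = 0) ->
  exists d : 'cV[F]_l, {in U, forall i, (G *m d) i 0 = c i 0}.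
Proof.
move=> dual_free.
pose D : 'M[F]_n := diag_mx (\row_i (i \in U)%:R).
have DE p (M : 'M[F]_(n, p)) i j : (D *m M) i j = (i \in U)%:R * M i j.
  by rewrite mul_diag_mx !mxE.
pose A := (D *m G)^T; pose v := (D *m c)^T.
have [/submxP [w Dc_eq] | ] := boolP (v <= A)%MS.
  exists w^T => i iU; move/(congr1 trmx): Dc_eq.
  rewrite /v /A !trmx_mul !trmxK -mulmxA => /(congr1 (fun M : 'cV[F]_n => M i 0)).
  by rewrite !DE iU !mul1r.
(* A column of [cokermx A] not killed by [v] yields a dual word supported on [U]. *)
rewrite submxE; set K := cokermx A => vK_nz.
have [j vKj] : exists j, (v *m K) 0 j != 0.
  apply/existsP; apply: contraR vK_nz => /existsPn vK0.
  by apply/eqP/rowP => j; rewrite [RHS]mxE; apply/eqP; exact: negbNE (vK0 j).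
pose x := D *m col j K.
have GTD : G^T *m D = A by rewrite /A trmx_mul tr_diag_mx.
have dual_x : G^T *m x = 0 by rewrite mulmxA GTD colE mulmxA mulmx_coker !mul0mx.
have supp_x : supp x \subset U.
  by apply/subsetP => i; rewrite inE DE; case: (i \in U); rewrite ?mul0r ?eqxx.
have: (v *m col j K) 0 0 != 0 by rewrite colE mulmxA -colE mxE.
by rewrite /v trmx_mul tr_diag_mx -mulmxA -/x (dual_free x) // mulmx0 mxE eqxx.
Qed.

Lemma F2_eq_of_nz (a b : 'F_2) : (a != 0) = (b != 0) -> a = b.
Proof. by case: a => [[|[|?]] ?]; case: b => [[|[|?]] ?] //= _; apply: val_inj. Qed.

Lemma supp_F2_inj (n : nat) : injective (@supp 'F_2 n).
Proof.
move=> x y /setP xy; apply/matrixP => i j; rewrite ord1; apply: F2_eq_of_nz.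
by have := xy i; rewrite !inE.
Qed.

Lemma card_F2_supported_le {n : nat} (U : {set 'I_n}) :
  (#|[set s : 'cV['F_2]_n | supp s \subset U]| <= 2 ^ #|U|)%N.
Proof.
rewrite -card_powerset -(card_imset _ (@supp_F2_inj n)); apply: subset_leq_card.
by apply/subsetP => A /imsetP [s]; rewrite inE => sU ->; rewrite powersetE.
Qed.

Lemma hwt_eq0 (n : nat) (x : 'cV['F_2]_n) : (hwt x == 0)%N = (x == 0).
Proof.
rewrite /hwt cards_eq0; apply/eqP/eqP => [/setP supp0 | ->].
  apply/matrixP => i j; rewrite ord1 mxE.
  by have := supp0 i; rewrite !inE => /negbFE/eqP.
by apply/setP => i; rewrite !inE mxE eqxx.
Qed.

Section DualCode.

Context {n l : nat} (G0 : 'M['F_2]_(n, l)).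

Lemma d0_le_hwt (x : 'cV['F_2]_n) : in_dual G0 x -> x != 0 -> (d0 G0 <= hwt x)%N.
Proof.
by move=> dual_x nz_x; rewrite /d0 -leEnat -minEnat; apply: bigmin_le_cond; apply/andP.
Qed.

Lemma d0_gt0 : (0 < d0 G0)%N.
Proof.
rewrite /d0 -leEnat -minEnat; apply: le_bigmin => // x /andP [_].
by rewrite leEnat lt0n hwt_eq0.
Qed.

Lemma d0_le : (d0 G0 <= n.+1)%N.
Proof. by rewrite /d0 -leEnat -minEnat; apply: bigmin_le_id. Qed.

Lemma sum_nonzero_dual_by_weight (R : pzSemiRingType) (b : nat) (F : nat -> R) :
  \sum_(x | in_dual G0 x && (x != 0) && (hwt x < b)%N) F (hwt x)
  = \sum_(d0 G0 <= w < b) (Bw G0 w)%:R * F w.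
Proof.
rewrite (@big_nat_partition _ _ _ _ _ (@hwt n) (d0 G0) b); last first.
  by move=> x /andP [/andP [dual_x nz_x] ->]; rewrite d0_le_hwt.
apply: eq_big_nat => w /andP [d0_w w_b]; rewrite mulr_natl -sumr_const /Bw.
apply: eq_big => [x | x /andP [_ /eqP -> //]]; rewrite inE.
have [wt_x | _] := eqVneq (hwt x) w; last by rewrite !andbF.
by rewrite -hwt_eq0 wt_x w_b !andbT -lt0n (leq_trans d0_gt0 d0_w) andbT.
Qed.

Definition dual_words_on (U : {set 'I_n}) : {set 'cV['F_2]_n} :=
  [set x | in_dual G0 x && (x != 0) & supp x \subset U].

Lemma encodable_of_dual_words_on0 (k : nat) (G1 : 'M['F_2]_(n, k)) (m : 'cV['F_2]_k)
    (U : {set 'I_n}) (s : 'cV['F_2]_n) :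
  dual_words_on U = set0 -> encodable G0 G1 m U s.
Proof.
move=> /setP no_words.
have [|d Gd] := @solvable_on_of_dual_free _ _ _ G0 U (G1 *m m + s).
  move=> x dual_x supp_x; apply/eqP; apply: contraTT isT => nz_x.
  by have := no_words x; rewrite !inE /in_dual dual_x eqxx nz_x supp_x.
by apply/existsP; exists d; apply/forallP => i; apply/implyP => iU; rewrite Gd // mxE.
Qed.

Lemma sum_stuck_fail_le (R : numFieldType) (k : nat) (G1 : 'M['F_2]_(n, k))
    (m : 'cV['F_2]_k) (U : {set 'I_n}) (c : R) :
  0 <= c ->
  \sum_(s : 'cV['F_2]_n | [forall i, (i \notin U) ==> (s i 0 == 0)])
      c * 2%:R^-1 ^+ #|U| * (~~ encodable G0 G1 m U s)%:R
  <= c * #|dual_words_on U|%:R.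
Proof.
move=> c_ge0; set N := #|dual_words_on U|.
have fail_le s : (~~ encodable G0 G1 m U s)%:R <= N%:R :> R.
  rewrite ler_nat; case: (boolP (encodable G0 G1 m U s)) => //= no_enc.
  by rewrite lt0n cards_eq0; apply: contraNneq no_enc; apply: encodable_of_dual_words_on0.
have weight_ge0 : 0 <= c * 2%:R^-1 ^+ #|U| :> R.
  by rewrite mulr_ge0 // exprn_ge0 // invr_ge0.
apply: le_trans (ler_sum _ (fun s _ => ler_wpM2l weight_ge0 (fail_le s))) _.
rewrite sumr_const; set S := (X in _ *+ X); rewrite -[_ *+ S]mulr_natr.
have S_le : (S <= 2 ^ #|U|)%N.
  apply: leq_trans _ (card_F2_supported_le U); apply: subset_leq_card.
  by apply/subsetP => s; rewrite !inE supp_subsetE.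
have -> : c * 2%:R^-1 ^+ #|U| * N%:R * S%:R = c * N%:R * (2%:R^-1 ^+ #|U| * S%:R).
  by rewrite -!mulrA; congr (_ * _); rewrite mulrCA.
rewrite ler_piMr ?mulr_ge0 // exprVn mulrC ler_pdivrMr ?exprn_gt0 ?ltr0n //.
by rewrite mul1r -natrX ler_nat.
Qed.

Lemma sum_card_dual_words_on (R : pzSemiRingType) (c : nat -> R) :
  \sum_(U : {set 'I_n}) c #|U| * #|dual_words_on U|%:R
  = \sum_(d0 G0 <= u < n.+1)
      c u * \sum_(d0 G0 <= w < u.+1) (Bw G0 w)%:R * ('C(n - w, u - w))%:R.
Proof.
transitivity (\sum_(x | in_dual G0 x && (x != 0))
    \sum_(U : {set 'I_n} | supp x \subset U) c #|U|).
  under eq_bigr => U _ do rewrite mulr_natr -sumr_const.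
  rewrite (exchange_big_dep (fun x => in_dual G0 x && (x != 0))) /= => [|U x _]; last first.
    by rewrite inE => /andP [].
  by apply: eq_bigr => x nz_dual_x; apply: eq_bigl => U; rewrite inE nz_dual_x.
transitivity (\sum_(x | in_dual G0 x && (x != 0))
    \sum_(0 <= u < n.+1) c u * ('C(n - hwt x, u - hwt x) * (hwt x <= u))%:R).
  apply: eq_bigr => x _; rewrite sum_supersets card_ord.
  by apply: eq_bigr => u _; rewrite mulr_natr.
have sum_u u : \sum_(x | in_dual G0 x && (x != 0))
      c u * ('C(n - hwt x, u - hwt x) * (hwt x <= u))%:R
    = c u * \sum_(d0 G0 <= w < u.+1) (Bw G0 w)%:R * ('C(n - w, u - w))%:R.
  rewrite -mulr_sumr -(sum_nonzero_dual_by_weight _ u.+1 (fun w => ('C(n - w, u - w))%:R)).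
  rewrite [in RHS]big_mkcondr; congr (_ * _); apply: eq_bigr => x _.
  by rewrite ltnS; case: (hwt x <= u)%N; rewrite ?muln1 ?muln0.
rewrite exchange_big (eq_bigr _ (fun u _ => sum_u u)) (big_cat_nat (leq0n _) d0_le) /=.
by rewrite big_nat big1 ?add0r // => u /andP [_ lt_u_d0]; rewrite big_geq ?mulr0.
Qed.

End DualCode.

Theorem corollary1 (R : realFieldType) (beta : R) (n l k : nat)
  (G0 : 'M['F_2]_(n, l)) (G1 : 'M['F_2]_(n, k)) (m : 'cV['F_2]_k) :
  0 < beta -> beta < 1 ->
  P_fail beta G0 G1 m <=
  \sum_(d0 G0 <= u < n.+1)
     beta ^+ u * (1 - beta) ^+ (n - u) *
     \sum_(d0 G0 <= w < u.+1) (Bw G0 w)%:R * ('C(n - w, u - w))%:R.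
Proof.
move=> beta_gt0 beta_lt1.
rewrite -(sum_card_dual_words_on G0 _ (fun u => beta ^+ u * (1 - beta) ^+ (n - u))).
apply: ler_sum => U _; apply: sum_stuck_fail_le.
by rewrite mulr_ge0 ?exprn_ge0 ?subr_ge0 ?ltW.
Qed.
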